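(* Let $M$, $A$ and $B$ be three packed matrices. Then, (1) $\mathrm{ov}(A, B) \leq_{\mathrm{M}} M$ if and only if there are two packed matrices $A'$ and $B'$ such that $A \leq_{\mathrm{M}} A'$, $B \leq_{\mathrm{M}} B'$, and $M \in \mathrm{Sh}_c(A', B')$; (2) $M \leq_{\mathrm{M}} \mathrm{un}(A, B)$ if and only if there are two packed matrices $A'$ and $B'$ such that $A' \leq_{\mathrm{M}} A$, $B' \leq_{\mathrm{M}} B$, and $M \in \mathrm{Sh}_c(A', B')$.
   Context: Let $k \geq 1$ and $A_k := \{0,1,\dots,k\}$. A ($k$-)packed matrix of size $n$ is an $n\times n$ matrix with entries in $A_k$ with at least one nonzero entry in each row and column. For packed $M_1, M_2$ of sizes $n_1, n_2$: $\mathrm{ov}(M_1,M_2) := \begin{pmatrix} M_1 & 0 \\ 0 & M_2\end{pmatrix}$ (over operator) and $\mathrm{un}(M_1,M_2) := \begin{pmatrix} 0 & M_1 \\ M_2 & 0 \end{pmatrix}$ (under operator), with zero blocks of appropriate sizes. The column shifted shuffle $\mathrm{Sh}_c(M_1,M_2)$ is the set of all matrices obtained by shuffling the columns of $M_1$ with an $n_2 \times n_1$ zero block placed below it, with the columns of $M_2$ with an $n_1 \times n_2$ zero block placed above it. Define $\to$ on packed matrices of size $n$: $M_1 \to M_2$ if there is $i \in [n-1]$ such that, with $s$ the number of $0$ ending the $i$th column of $M_1$ and $p$ the number of $0$ starting its $(i+1)$st column, $s + p \geq n$ and $M_2$ is obtained from $M_1$ by exchanging its $i$th and $(i+1)$st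 columns. $\leq_{\mathrm{M}}$ is the reflexive and transitive closure of $\to$. *)

From mathcomp Require Import all_boot all_order all_algebra all_fingroup.
From Stdlib Require Import Relations.
Set Implicit Arguments. Unset Strict Implicit. Unset Printing Implicit Defensive.

(* Matrices with natural-number entries; entries are required to lie in
   A_k = {0,...,k} by the predicate [packed]. *)

Definition packed (k n : nat) (M : 'M[nat]_n) : Prop :=
  (forall i j, M i j <= k) /\
  (forall i, exists j, M i j != 0) /\
  (forall j, exists i, M i j != 0).

Definition ov n1 n2 (M1 : 'M[nat]_n1) (M2 : 'M[nat]_n2) : 'M[nat]_(n1 + n2) :=
  block_mx M1 0 0 M2.

(* under operator: [[0, M1], [M2, 0]]; the block matrix has type
   'M_(n1+n2, n2+n1), cast to the square type 'M_(n1+n2). *)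
Definition un n1 n2 (M1 : 'M[nat]_n1) (M2 : 'M[nat]_n2) : 'M[nat]_(n1 + n2) :=
  castmx (erefl (n1 + n2), addnC n2 n1)
    (block_mx (0 : 'M[nat]_(n1, n2)) M1 M2 (0 : 'M[nat]_(n2, n1))).

(* column shifted shuffle: M is obtained by placing column j of ov M1 M2
   at position s j, where s keeps the relative order of the columns of M1
   (first n1 columns) and the relative order of those of M2. *)
Definition in_Shc n1 n2 (M : 'M[nat]_(n1 + n2))
    (M1 : 'M[nat]_n1) (M2 : 'M[nat]_n2) : Prop :=
  exists s : {perm 'I_(n1 + n2)},
    (forall a b : 'I_n1, a < b -> s (lshift n2 a) < s (lshift n2 b)) /\
    (forall a b : 'I_n2, a < b -> s (rshift n1 a) < s (rshift n1 b)) /\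
    (forall i j, M i (s j) = ov M1 M2 i j).

Definition colseq n (M : 'M[nat]_n) (j : 'I_n) : seq nat :=
  [seq M r j | r <- enum 'I_n].

Definition lead0 (s : seq nat) : nat := find (fun x => x != 0) s.
Definition trail0 (s : seq nat) : nat := lead0 (rev s).

Definition mstep n (M1 M2 : 'M[nat]_n) : Prop :=
  exists i j : 'I_n, val j = (val i).+1 /\
    n <= trail0 (colseq M1 i) + lead0 (colseq M1 j) /\
    M2 = xcol i j M1.

Definition leM n : relation 'M[nat]_n := clos_refl_trans _ (@mstep n).

From mathcomp Require Import all_boot all_order all_algebra all_fingroup.
From mathcomp Require Import zify.
From Stdlib Require Import Relations.
Set Implicit Arguments. Unset Strict Implicit. Unset Printing Implicit Defensive.

(* Columns of [ov A B] coming from [A] vanish on the last [n2] rows and those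
   coming from [B] on the first [n1] rows.  Hence a move applied to a column
   shuffle of [ov A B] either acts inside the [A]-columns or inside the
   [B]-columns, where it is a move of [A] or of [B], or exchanges an [A]-column
   with the [B]-column just to its right, which merely changes the shuffle; the
   opposite exchange is impossible since columns of packed matrices are nonzero.
   So everything above [ov A B] (resp. below [un A B], itself a shuffle) is a
   shuffle of blocks above [A] and [B] (resp. below them).  Conversely, moving
   [A]-columns rightwards past [B]-columns one at a time leads from a shuffle to
   any shuffle placing each [A]-column further right, and [ov] and [un] are the
   extreme shuffles. *)

Lemma leq_find_iff (T : Type) (p : pred T) x0 (s : seq T) q : q <= size s ->
  q <= find p s <-> forall r, r < q -> ~~ p (nth x0 s r).
Proof.
move=> le_q_s; split=> [le_q_find r lt_rq | nop].
  by rewrite before_find // (leq_trans lt_rq).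
rewrite leqNgt; apply/negP => lt_find_q.
have hs : has p s by rewrite has_find (leq_trans lt_find_q).
by move: (nth_find x0 hs); rewrite (negbTE (nop _ lt_find_q)).
Qed.

Section ZeroRuns.
Variables (n : nat) (M : 'M[nat]_n).

Lemma size_colseq j : size (colseq M j) = n.
Proof. by rewrite size_map size_enum_ord. Qed.

Lemma nth_colseq j (r : 'I_n) : nth 0 (colseq M j) r = M r j.
Proof. by rewrite /colseq (nth_map r) ?size_enum_ord ?nth_ord_enum. Qed.

Lemma leq_lead0 j q : q <= n ->
  q <= lead0 (colseq M j) <-> forall r : 'I_n, r < q -> M r j = 0.
Proof.
move=> le_qn; rewrite (leq_find_iff _ 0) ?size_colseq //.
split=> [h r lt_rq | h r lt_rq].
  by apply/eqP/negPn; rewrite -nth_colseq h.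
have lt_rn : r < n by exact: leq_trans lt_rq le_qn.
by rewrite -[r]/(val (Ordinal lt_rn)) nth_colseq h.
Qed.

Lemma leq_trail0 j q : q <= n ->
  q <= trail0 (colseq M j) <-> forall r : 'I_n, n - q <= r -> M r j = 0.
Proof.
move=> le_qn; rewrite /trail0 (leq_find_iff _ 0) ?size_rev ?size_colseq //.
split=> [h r le_r | h r lt_rq].
  have lt_r' : n - r.+1 < q by have := ltn_ord r; lia.
  apply/eqP/negPn; move: (h _ lt_r'); rewrite nth_rev ?size_colseq; last lia.
  by rewrite (_ : n - (n - r.+1).+1 = r) ?nth_colseq //; have := ltn_ord r; lia.
have lt_r'n : n - r.+1 < n by lia.
rewrite nth_rev ?size_colseq; last lia.
by rewrite -[n - r.+1]/(val (Ordinal lt_r'n)) nth_colseq h //=; lia.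
Qed.

End ZeroRuns.

Definition separated n (M : 'M[nat]_n) (i j : 'I_n) :=
  exists q, [/\ q <= n, forall r : 'I_n, q <= r -> M r i = 0
                      & forall r : 'I_n, r < q -> M r j = 0].

Lemma separatedE n (M : 'M[nat]_n) i j :
  n <= trail0 (colseq M i) + lead0 (colseq M j) <-> separated M i j.
Proof.
split=> [le_n | [q [le_qn Mi Mj]]].
  set t := minn (trail0 (colseq M i)) n.
  exists (n - t); split; first exact: leq_subr.
  - by apply/(leq_trail0 M i (geq_minr _ _)); exact: geq_minl.
  - apply/(leq_lead0 M j (leq_subr _ _)); lia.
have /(leq_lead0 M j le_qn) le_q_lead := Mj.
have : n - q <= trail0 (colseq M i).
  by apply/(leq_trail0 M i (leq_subr q n)) => r; rewrite subKn //; exact: Mi.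
lia.
Qed.

Lemma mstepP n (M M' : 'M[nat]_n) :
  mstep M M' <-> exists i j : 'I_n, [/\ j = i.+1 :> nat, separated M i j & M' = xcol i j M].
Proof.
split=> [[i [j [ij [sep ->]]]] | [i [j [ij sep ->]]]]; exists i, j.
  by split=> //; apply/separatedE.
by split=> //; split=> //; apply/separatedE.
Qed.

Lemma separated_col_perm n (s : 'S_n) (N : 'M[nat]_n) i j :
  separated (col_perm s N) i j <-> separated N (s i) (s j).
Proof.
have E r c : col_perm s N r c = N r (s c) by rewrite mxE.
split=> -[q [le_qn Ni Nj]]; exists q; split=> // r le_r.
- by rewrite -E Ni.
- by rewrite -E Nj.
- by rewrite E Ni.
- by rewrite E Nj.
Qed.

Lemma xcol_col_permV (R : Type) m n (s : 'S_n) p q (N : 'M[R]_(m, n)) :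
  xcol p q (col_perm s^-1 N) = col_perm (s * tperm p q)^-1 N.
Proof. by rewrite /xcol -col_permM invMg tpermV. Qed.

Lemma col_permV_xcol (R : Type) m n (s : 'S_n) x y (N : 'M[R]_(m, n)) :
  col_perm s^-1 (xcol x y N) = xcol (s x) (s y) (col_perm s^-1 N).
Proof.
apply/matrixP => i j; rewrite !mxE -[j in RHS](permKV s).
by rewrite -(inj_tperm _ _ _ perm_inj) permK.
Qed.

Lemma xcolK (R : Type) m n (p q : 'I_n) : involutive (@xcol R m n p q).
Proof. by move=> N; apply/matrixP => i j; rewrite !mxE tpermK. Qed.

Lemma packed_xcol k n (N : 'M[nat]_n) a b : packed k (xcol a b N) <-> packed k N.
Proof.
suff imp N' : packed k N' -> packed k (xcol a b N') by split=> [/imp | /imp]; rewrite ?xcolK.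
case=> le_k [rowP colP]; split; [|split].
- by move=> i j; rewrite mxE.
- by move=> i; have [j Nij] := rowP i; exists (tperm a b j); rewrite mxE tpermK.
- by move=> j; have [i Nij] := colP (tperm a b j); exists i; rewrite mxE.
Qed.

Lemma packed_leM k n (N N' : 'M[nat]_n) : leM N N' -> packed k N <-> packed k N'.
Proof.
elim=> [X Y /mstepP [i [j [_ _ ->]]] | // | X Y Z _ XY _ YZ].
  by rewrite packed_xcol.
by rewrite XY.
Qed.

Lemma ovEul n1 n2 (A : 'M[nat]_n1) (B : 'M[nat]_n2) a c :
  ov A B (lshift n2 a) (lshift n2 c) = A a c.
Proof. by rewrite /ov block_mxEul. Qed.
Lemma ovEur n1 n2 (A : 'M[nat]_n1) (B : 'M[nat]_n2) a c :
  ov A B (lshift n2 a) (rshift n1 c) = 0.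
Proof. by rewrite /ov block_mxEur mxE. Qed.
Lemma ovEdl n1 n2 (A : 'M[nat]_n1) (B : 'M[nat]_n2) a c :
  ov A B (rshift n1 a) (lshift n2 c) = 0.
Proof. by rewrite /ov block_mxEdl mxE. Qed.
Lemma ovEdr n1 n2 (A : 'M[nat]_n1) (B : 'M[nat]_n2) a c :
  ov A B (rshift n1 a) (rshift n1 c) = B a c.
Proof. by rewrite /ov block_mxEdr. Qed.

Section Over.
Variables (n1 n2 : nat) (A : 'M[nat]_n1) (B : 'M[nat]_n2).

Lemma separated_ov_l a b : separated (ov A B) (lshift n2 a) (lshift n2 b) <-> separated A a b.
Proof.
split=> -[q [le_q Ai Aj]].
  exists (minn q n1); split=> [|r le_r|r lt_r]; first exact: geq_minr.
  - by rewrite -(ovEul A B) Ai //=; have := ltn_ord r; lia.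
  - by rewrite -(ovEul A B) Aj //=; lia.
exists q; split; first lia.
- by move=> r; case: (split_ordP r) => c -> /= le_c; rewrite ?ovEul ?ovEdl ?Ai.
- by move=> r; case: (split_ordP r) => c -> /= lt_c; rewrite ?ovEul ?Aj //; lia.
Qed.

Lemma separated_ov_r a b : separated (ov A B) (rshift n1 a) (rshift n1 b) <-> separated B a b.
Proof.
split=> -[q [le_q Bi Bj]].
  exists (q - n1); split=> [|r le_r|r lt_r]; first lia.
  - by rewrite -(ovEdr A B) Bi //=; lia.
  - by rewrite -(ovEdr A B) Bj //=; lia.
exists (n1 + q); split; first lia.
- by move=> r; case: (split_ordP r) => c -> /= le_c; rewrite ?ovEur ?ovEdr ?Bi //; lia.
- by move=> r; case: (split_ordP r) => c -> /= lt_c; rewrite ?ovEur ?ovEdr ?Bj //; lia.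
Qed.

Lemma separated_ov_lr a b : separated (ov A B) (lshift n2 a) (rshift n1 b).
Proof.
exists n1; split; first exact: leq_addr.
- by move=> r; case: (split_ordP r) => c -> /= le_c; rewrite ?ovEdl //; have := ltn_ord c; lia.
- by move=> r; case: (split_ordP r) => c -> /= lt_c; rewrite ?ovEur //; lia.
Qed.

Lemma separated_ov_rl a b : (exists r, B r a != 0) -> (exists r, A r b != 0) ->
  ~ separated (ov A B) (rshift n1 a) (lshift n2 b).
Proof.
move=> [ra Ba] [rb Ab] [q [_ Bi Aj]].
case: (leqP q (n1 + ra)) => [le_q | lt_q].
  by move: Ba; rewrite -(ovEdr A B) Bi.
by move: Ab; rewrite -(ovEul A B) Aj //=; have := ltn_ord rb; lia.
Qed.

Lemma ov_xcoll a b : ov (xcol a b A) B = xcol (lshift n2 a) (lshift n2 b) (ov A B).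
Proof.
apply/matrixP => i j; rewrite [RHS]mxE.
case: (split_ordP j) => c ->.
  rewrite -(inj_tperm _ _ _ (@lshift_inj _ _)).
  by case: (split_ordP i) => r ->; rewrite ?ovEul ?ovEdl ?mxE.
by rewrite tpermD ?eq_lrshift //; case: (split_ordP i) => r ->; rewrite ?ovEur ?ovEdr.
Qed.

Lemma ov_xcolr a b : ov A (xcol a b B) = xcol (rshift n1 a) (rshift n1 b) (ov A B).
Proof.
apply/matrixP => i j; rewrite [RHS]mxE.
case: (split_ordP j) => c ->.
  by rewrite tpermD ?eq_rlshift //; case: (split_ordP i) => r ->; rewrite ?ovEul ?ovEdl.
rewrite -(inj_tperm _ _ _ (@rshift_inj _ _)).
by case: (split_ordP i) => r ->; rewrite ?ovEur ?ovEdr ?mxE.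
Qed.

End Over.

Lemma increasing_tperm_succ m n (f : 'I_m -> 'I_n) (p q : 'I_n) :
  {homo f : a b / a < b} -> q = p.+1 :> nat ->
  (forall c, f c != q) \/ (forall c, f c != p) ->
  {homo (fun c => tperm p q (f c)) : a b / a < b}.
Proof.
move=> incr pq avoid a b lt_ab; have := incr a b lt_ab.
have {}avoid : (forall c, f c <> q :> nat) \/ (forall c, f c <> p :> nat).
  by case: avoid => avoid; [left|right] => c /val_inj; apply/eqP.
rewrite !permE /= -!(inj_eq val_inj) /=.
by case: avoid => avoid; move: (avoid a) (avoid b); repeat case: ifP => /eqP ?; lia.
Qed.

Lemma increasing_succ m n (f : 'I_m -> 'I_n) : {homo f : a b / a < b} ->
  forall a b, f b = (f a).+1 :> nat -> b = a.+1 :> nat.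
Proof.
move=> incr a b fab; case: (ltngtP a b) => [lt_ab | lt_ba | /val_inj eq_ab].
- apply/eqP; rewrite eqn_leq lt_ab andbT leqNgt; apply/negP => lt_Sa_b.
  have lt_Sa_m : a.+1 < m := ltn_trans lt_Sa_b (ltn_ord b).
  have := incr a (Ordinal lt_Sa_m) (ltnSn a); have := incr (Ordinal lt_Sa_m) b lt_Sa_b; lia.
- by have := incr b a lt_ba; lia.
- by move: fab; rewrite eq_ab; lia.
Qed.

Lemma sorted_codom m n (f : 'I_m -> 'I_n) : {homo f : a b / a < b} ->
  sorted (fun x y : 'I_n => x < y) (codom f).
Proof.
move=> incr; rewrite codomE.
apply: (@homo_sorted _ _ f (fun x y : 'I_m => x < y)) => //.
by rewrite -(@sorted_map _ _ val ltn) val_enum_ord iota_ltn_sorted.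
Qed.

Lemma increasing_codom_inj m n (f g : 'I_m -> 'I_n) :
  {homo f : a b / a < b} -> {homo g : a b / a < b} -> codom f =i codom g -> f =1 g.
Proof.
move=> incf incg fg a.
have ltn_ord_trans : ssrbool.transitive (fun x y : 'I_n => x < y).
  by move=> ? ? ?; apply: ltn_trans.
have := irr_sorted_eq ltn_ord_trans (fun x => ltnn x)
  (sorted_codom incf) (sorted_codom incg) fg.
move/(congr1 (nth (f a) ^~ a)); rewrite !codomE.
by rewrite !(nth_map a) -?enumT ?size_enum_ord // nth_ord_enum.
Qed.

Lemma increasing_ord_ge m n (f : 'I_m -> 'I_n) :
  {homo f : a b / a < b} -> forall a : 'I_m, a <= f a.
Proof.
move=> incr [a lt_am]; elim: a lt_am => [//|a IH] lt_Sam.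
have lt_am : a < m by exact: ltnW.
by have := IH lt_am; have := incr (Ordinal lt_am) (Ordinal lt_Sam) (ltnSn a) => /=; lia.
Qed.

Lemma increasing_ord_le m n (f : 'I_m -> 'I_n) :
  {homo f : a b / a < b} -> forall a : 'I_m, f a <= n - m + a.
Proof.
move=> incr a.
have incr_rev : {homo (fun c => rev_ord (f (rev_ord c))) : c d / c < d}.
  move=> c d lt_cd /=.
  have lt_rev : rev_ord d < rev_ord c by rewrite /=; have := ltn_ord d; lia.
  by have := incr _ _ lt_rev; have := ltn_ord (f (rev_ord c)); lia.
have := increasing_ord_ge incr_rev (rev_ord a); rewrite /= rev_ordK.
by have := ltn_ord a; have := ltn_ord (f a); lia.
Qed.

Section Shuffle.
Variables n1 n2 : nat.
Implicit Types (s t : {perm 'I_(n1 + n2)}) (A : 'M[nat]_n1) (B : 'M[nat]_n2).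

Definition shuffle_perm s :=
  {homo (fun a => s (lshift n2 a)) : a b / a < b} /\
  {homo (fun b => s (rshift n1 b)) : a b / a < b}.

(* [col_perm s^-1 N] puts column [x] of [N] at position [s x]. *)
Lemma in_ShcP (M : 'M[nat]_(n1 + n2)) A B :
  in_Shc M A B <-> exists s, shuffle_perm s /\ M = col_perm s^-1 (ov A B).
Proof.
split=> [[s [incl [incr Ms]]] | [s [[incl incr] ->]]]; exists s.
  by split=> //; apply/matrixP => i j; rewrite mxE -Ms permKV.
by split=> //; split=> // i j; rewrite mxE permK.
Qed.

Lemma shuffle_perm1 : shuffle_perm 1.
Proof. by split=> a b /=; rewrite !perm1 /= ?ltn_add2l. Qed.

Lemma codom_perm_rshift s x :
  (x \in codom (fun b => s (rshift n1 b))) = (x \notin codom (fun a => s (lshift n2 a))).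
Proof.
rewrite -[x](permKV s); case: (split_ordP (s^-1%g x)) => y ->.
  have inL : s (lshift n2 y) \in codom (fun a => s (lshift n2 a)) by apply/codomP; exists y.
  by rewrite inL; apply/codomP => -[b /perm_inj /eqP]; rewrite eq_lrshift.
have inR : s (rshift n1 y) \in codom (fun b => s (rshift n1 b)) by apply/codomP; exists y.
by rewrite inR; apply/esym/negP => /codomP [a /perm_inj /eqP]; rewrite eq_rlshift.
Qed.

Lemma shuffle_perm_inj s t : shuffle_perm s -> shuffle_perm t ->
  (forall a, s (lshift n2 a) = t (lshift n2 a)) -> s = t.
Proof.
move=> [_ incr_s] [_ incr_t] eqL.
have eqR : (fun b => s (rshift n1 b)) =1 (fun b => t (rshift n1 b)).
  apply: increasing_codom_inj => // x.
  by rewrite !codom_perm_rshift (@eq_codom _ _ (fun a => s (lshift n2 a)) _ eqL).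
by apply/permP => x; case: (split_ordP x) => y ->; [exact: eqL | exact: eqR].
Qed.

Lemma shuffle_perm_tperm s a b : shuffle_perm s ->
  (s (rshift n1 b) = (s (lshift n2 a)).+1 :> nat \/
   s (lshift n2 a) = (s (rshift n1 b)).+1 :> nat) ->
  shuffle_perm (s * tperm (s (lshift n2 a)) (s (rshift n1 b)))%g.
Proof.
move=> [incl incr] adj.
have neq c d : s (lshift n2 c) != s (rshift n1 d) by rewrite (inj_eq perm_inj) eq_lrshift.
case: adj => adj; [|rewrite tpermC]; split=> c d lt_cd; rewrite !permM; move: c d lt_cd.
- exact: increasing_tperm_succ incl adj (or_introl (neq ^~ b)).
- by apply: increasing_tperm_succ incr adj _; right => c; rewrite eq_sym.
- exact: increasing_tperm_succ incl adj (or_intror (neq ^~ b)).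
- by apply: increasing_tperm_succ incr adj _; left => c; rewrite eq_sym.
Qed.

End Shuffle.

Section ShuffleOrder.
Variables (n1 n2 : nat) (A : 'M[nat]_n1) (B : 'M[nat]_n2).
Implicit Types s t : {perm 'I_(n1 + n2)}.

Lemma shuffle_perm_next s t a : shuffle_perm s -> shuffle_perm t ->
  s (lshift n2 a) < t (lshift n2 a) ->
  exists a' b', s (lshift n2 a') < t (lshift n2 a') /\
                s (rshift n1 b') = (s (lshift n2 a')).+1 :> nat.
Proof.
move=> [incl_s _] [incl_t _]; move: {2}(n1 - a) (leqnn (n1 - a)) => d.
elim: d a => [|d IH] a le_d lt_st; first by have := ltn_ord a; lia.
have lt_next : (s (lshift n2 a)).+1 < n1 + n2 by have := ltn_ord (t (lshift n2 a)); lia.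
have := permKV s (Ordinal lt_next).
case: (split_ordP (s^-1%g (Ordinal lt_next))) => y -> next.
  have ya := increasing_succ incl_s (congr1 val next : _ = (s (lshift n2 a)).+1).
  apply: (IH y); first lia.
  by rewrite next /=; have := incl_t a y; rewrite ya => /(_ (ltnSn _)); lia.
by exists a, y; rewrite next.
Qed.

Lemma leM_shuffle_perm s t : shuffle_perm s -> shuffle_perm t ->
  (forall a, s (lshift n2 a) <= t (lshift n2 a)) ->
  leM (col_perm s^-1 (ov A B)) (col_perm t^-1 (ov A B)).
Proof.
move=> sh_s sh_t; move Hd : (\sum_a (t (lshift n2 a) - s (lshift n2 a))) => d.
elim: d s sh_s Hd => [|d IH] s sh_s Hd le_st.
  suff -> : s = t by exact: rt_refl.
  apply: shuffle_perm_inj => // a; apply/val_inj/eqP; rewrite eqn_leq le_st -subn_eq0.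
  by move/eqP: Hd; rewrite sum_nat_eq0 => /forallP /(_ a).
have [a lt_a] : exists a, s (lshift n2 a) < t (lshift n2 a).
  case: (boolP [exists a, s (lshift n2 a) < t (lshift n2 a)]) => [/existsP //|].
  move=> /existsPn none; move: Hd.
  by rewrite big1 // => c _; apply/eqP; rewrite subn_eq0 leqNgt none.
have [a' [b' [lt_a' adj]]] := shuffle_perm_next sh_s sh_t lt_a.
set s' := (s * tperm (s (lshift n2 a')) (s (rshift n1 b')))%g.
have s'L c : s' (lshift n2 c) = if c == a' then s (rshift n1 b') else s (lshift n2 c).
  rewrite permM; case: eqP => [-> | /eqP ne]; first exact: tpermL.
  by rewrite tpermD ?(inj_eq perm_inj) ?eq_rlshift // eq_lshift eq_sym.
apply: rt_trans _ (IH s' (shuffle_perm_tperm sh_s (or_introl adj)) _ _).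
- apply/rt_step/mstepP; exists (s (lshift n2 a')), (s (rshift n1 b')); split=> //.
    by apply/separated_col_perm; rewrite !permK; exact: separated_ov_lr.
  by rewrite xcol_col_permV.
- rewrite (bigD1 a') //= in Hd; rewrite (bigD1 a') //= s'L eqxx.
  rewrite (eq_bigr (fun c => t (lshift n2 c) - s (lshift n2 c))); first lia.
  by move=> c /negbTE ne; rewrite s'L ne.
- by move=> c; rewrite s'L; case: eqP => [-> | _]; rewrite ?adj.
Qed.

End ShuffleOrder.

Section Under.
Variables n1 n2 : nat.

Definition un_pos (x : 'I_(n1 + n2)) : 'I_(n1 + n2) :=
  cast_ord (addnC n2 n1)
    (unsplit (match split x with inl a => inr a | inr b => inl b end)).

Lemma un_pos_inj : injective un_pos.
Proof.
move=> x y /cast_ord_inj /(can_inj unsplitK) e; apply: (can_inj splitK).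
by case: (split x) (split y) e => a [] b // [->].
Qed.

Definition un_perm : {perm 'I_(n1 + n2)} := perm un_pos_inj.

Lemma un_perm_lshift a : un_perm (lshift n2 a) = n2 + a :> nat.
Proof. by rewrite permE /un_pos -[lshift n2 a]/(unsplit (inl a)) unsplitK. Qed.

Lemma un_perm_rshift b : un_perm (rshift n1 b) = b :> nat.
Proof. by rewrite permE /un_pos -[rshift n1 b]/(unsplit (inr b)) unsplitK. Qed.

Lemma shuffle_un_perm : shuffle_perm un_perm.
Proof.
by split=> a b lt_ab /=; rewrite ?un_perm_lshift ?un_perm_rshift ?ltn_add2l.
Qed.

Lemma un_col_perm (A : 'M[nat]_n1) (B : 'M[nat]_n2) :
  un A B = col_perm un_perm^-1 (ov A B).
Proof.
apply/matrixP => i j; rewrite mxE castmxE cast_ord_id.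
case: (split_ordP (un_perm^-1%g j)) => x e; rewrite e;
  have := permKV un_perm j; rewrite e => /(congr1 val) /=;
  rewrite ?un_perm_lshift ?un_perm_rshift => ej.
- rewrite (_ : cast_ord _ j = rshift n2 x); last exact: val_inj.
  by case: (split_ordP i) => r ->; rewrite ?block_mxEur ?block_mxEdr ?ovEul ?ovEdl ?mxE.
- rewrite (_ : cast_ord _ j = lshift n1 x); last exact: val_inj.
  by case: (split_ordP i) => r ->; rewrite ?block_mxEul ?block_mxEdl ?ovEur ?ovEdr ?mxE.
Qed.

End Under.

Section Lifting.
Variables (n1 n2 : nat) (s : {perm 'I_(n1 + n2)}).

Lemma leM_col_perm_ov_l (A A' : 'M[nat]_n1) (B : 'M[nat]_n2) :
  (forall a b : 'I_n1, b = a.+1 :> nat -> s (lshift n2 b) = (s (lshift n2 a)).+1 :> nat) ->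
  leM A A' -> leM (col_perm s^-1 (ov A B)) (col_perm s^-1 (ov A' B)).
Proof.
move=> adj; elim=> [X Y /mstepP [a [b [ab sep ->]]] | X | X Y Z _ XY _ YZ].
- apply/rt_step/mstepP; exists (s (lshift n2 a)), (s (lshift n2 b)); split.
  + exact: adj.
  + by apply/separated_col_perm; rewrite !permK; apply/separated_ov_l.
  + by rewrite ov_xcoll col_permV_xcol.
- exact: rt_refl.
- exact: rt_trans XY YZ.
Qed.

Lemma leM_col_perm_ov_r (A : 'M[nat]_n1) (B B' : 'M[nat]_n2) :
  (forall a b : 'I_n2, b = a.+1 :> nat -> s (rshift n1 b) = (s (rshift n1 a)).+1 :> nat) ->
  leM B B' -> leM (col_perm s^-1 (ov A B)) (col_perm s^-1 (ov A B')).
Proof.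
move=> adj; elim=> [X Y /mstepP [a [b [ab sep ->]]] | X | X Y Z _ XY _ YZ].
- apply/rt_step/mstepP; exists (s (rshift n1 a)), (s (rshift n1 b)); split.
  + exact: adj.
  + by apply/separated_col_perm; rewrite !permK; apply/separated_ov_r.
  + by rewrite ov_xcolr col_permV_xcol.
- exact: rt_refl.
- exact: rt_trans XY YZ.
Qed.

End Lifting.

Section OverUnder.
Variables (n1 n2 : nat).
Implicit Types (A : 'M[nat]_n1) (B : 'M[nat]_n2).

Lemma col_perm_ov1 A B : col_perm (1 : 'S_(n1 + n2))^-1 (ov A B) = ov A B.
Proof. by rewrite invg1 col_perm1. Qed.

Lemma leM_ov A A' B B' : leM A A' -> leM B B' -> leM (ov A B) (ov A' B').
Proof.
move=> AA' BB'; rewrite -(col_perm_ov1 A B) -(col_perm_ov1 A' B').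
apply: rt_trans (leM_col_perm_ov_l _ _ AA') (leM_col_perm_ov_r _ _ BB');
  by move=> a b ab; rewrite !perm1 /= ab ?addnS.
Qed.

Lemma leM_un A A' B B' : leM A A' -> leM B B' -> leM (un A B) (un A' B').
Proof.
move=> AA' BB'; rewrite !un_col_perm.
apply: rt_trans (leM_col_perm_ov_l _ _ AA') (leM_col_perm_ov_r _ _ BB');
  by move=> a b ab; rewrite ?un_perm_lshift ?un_perm_rshift ab ?addnS.
Qed.

Lemma leM_ov_shuffle A B s : shuffle_perm s -> leM (ov A B) (col_perm s^-1 (ov A B)).
Proof.
move=> sh; rewrite -{1}(col_perm_ov1 A B).
apply: (leM_shuffle_perm A B (shuffle_perm1 _ _) sh) => a.
by rewrite perm1; exact: increasing_ord_ge sh.1 a.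
Qed.

Lemma leM_shuffle_un A B s : shuffle_perm s -> leM (col_perm s^-1 (ov A B)) (un A B).
Proof.
move=> sh; rewrite un_col_perm; apply: (leM_shuffle_perm A B sh (shuffle_un_perm _ _)) => a.
by rewrite un_perm_lshift; have := increasing_ord_le sh.1 a; rewrite addKn.
Qed.

Lemma in_Shc_ov A B : in_Shc (ov A B) A B.
Proof.
by apply/in_ShcP; exists 1%g; rewrite col_perm_ov1; split; first exact: shuffle_perm1.
Qed.

Lemma in_Shc_un A B : in_Shc (un A B) A B.
Proof.
apply/in_ShcP; exists (un_perm n1 n2).
by split; [exact: shuffle_un_perm | exact: un_col_perm].
Qed.

End OverUnder.

Section Simulation.
Variables (k n1 n2 : nat).
Implicit Types (A : 'M[nat]_n1) (B : 'M[nat]_n2) (X Y : 'M[nat]_(n1 + n2)).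

Lemma mstep_in_Shc_fwd X Y A B : packed k A -> packed k B ->
  in_Shc X A B -> mstep X Y -> exists A' B', [/\ leM A A', leM B B' & in_Shc Y A' B'].
Proof.
move=> pA pB /in_ShcP [s [sh ->]] /mstepP [p [q [pq sep ->]]].
rewrite -[p](permKV s) -[q](permKV s) in pq sep *.
move/separated_col_perm: sep; rewrite !permK; move: pq.
case: (split_ordP (s^-1%g p)) => a ->; case: (split_ordP (s^-1%g q)) => b -> pq sep.
- exists (xcol a b A), B; split; last 2 first.
  + exact: rt_refl.
  + by apply/in_ShcP; exists s; rewrite ov_xcoll col_permV_xcol.
  apply/rt_step/mstepP; exists a, b; split=> //; last by move/separated_ov_l: sep.
  exact: increasing_succ sh.1 _ _ pq.
- exists A, B; split; try exact: rt_refl.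
  apply/in_ShcP; exists (s * tperm (s (lshift n2 a)) (s (rshift n1 b)))%g.
  by rewrite xcol_col_permV; split=> //; exact: shuffle_perm_tperm sh (or_introl pq).
- by case: (separated_ov_rl (pB.2.2 a) (pA.2.2 b) sep).
- exists A, (xcol a b B); split; first exact: rt_refl; last first.
    by apply/in_ShcP; exists s; rewrite ov_xcolr col_permV_xcol.
  apply/rt_step/mstepP; exists a, b; split=> //; last by move/separated_ov_r: sep.
  exact: increasing_succ sh.2 _ _ pq.
Qed.

Lemma mstep_in_Shc_bwd X Y A B : packed k A -> packed k B ->
  in_Shc Y A B -> mstep X Y -> exists A' B', [/\ leM A' A, leM B' B & in_Shc X A' B'].
Proof.
move=> pA pB /in_ShcP [s [sh ->]] /mstepP [p [q [pq sep eY]]].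
have {eY} eX : X = xcol p q (col_perm s^-1 (ov A B)) by rewrite eY xcolK.
rewrite {}eX -[p](permKV s) -[q](permKV s) in pq sep *; move: pq sep.
case: (split_ordP (s^-1%g p)) => a ->; case: (split_ordP (s^-1%g q)) => b -> pq sep.
- rewrite -col_permV_xcol -ov_xcoll in sep *.
  move/separated_col_perm: sep; rewrite !permK => /separated_ov_l sep.
  exists (xcol a b A), B; split; last 2 first.
  + exact: rt_refl.
  + by apply/in_ShcP; exists s.
  rewrite -[X in leM _ X](xcolK a b A); apply/rt_step/mstepP; exists a, b; split=> //.
  exact: increasing_succ sh.1 _ _ pq.
- exfalso; rewrite xcol_col_permV in sep.
  set s' := (s * tperm _ _)%g in sep.
  have e1 : s (lshift n2 a) = s' (rshift n1 b) by rewrite permM tpermR.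
  have e2 : s (rshift n1 b) = s' (lshift n2 a) by rewrite permM tpermL.
  move: sep; rewrite e1 e2 => /separated_col_perm; rewrite !permK.
  exact: separated_ov_rl (pB.2.2 b) (pA.2.2 a).
- exists A, B; split; try exact: rt_refl.
  apply/in_ShcP; exists (s * tperm (s (lshift n2 b)) (s (rshift n1 a)))%g; split.
    exact: shuffle_perm_tperm sh (or_intror pq).
  by rewrite tpermC xcol_col_permV.
- rewrite -col_permV_xcol -ov_xcolr in sep *.
  move/separated_col_perm: sep; rewrite !permK => /separated_ov_r sep.
  exists A, (xcol a b B); split; first exact: rt_refl; last first.
    by apply/in_ShcP; exists s.
  rewrite -[X in leM _ X](xcolK a b B); apply/rt_step/mstepP; exists a, b; split=> //.
  exact: increasing_succ sh.2 _ _ pq.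
Qed.

Lemma leM_in_Shc_fwd X Y A B : packed k A -> packed k B ->
  in_Shc X A B -> leM X Y -> exists A' B', [/\ leM A A', leM B B' & in_Shc Y A' B'].
Proof.
move=> pA pB XAB XY.
elim: (clos_rt_rt1n _ _ _ _ XY) A B pA pB XAB => [X0 | X0 Y0 Z0 XY0 _ IH] A B pA pB XAB.
  by exists A, B; split=> //; exact: rt_refl.
have [A1 [B1 [AA1 BB1 YAB1]]] := mstep_in_Shc_fwd pA pB XAB XY0.
have [A2 [B2 [A1A2 B1B2 ZAB2]]] :=
  IH A1 B1 ((packed_leM k AA1).1 pA) ((packed_leM k BB1).1 pB) YAB1.
by exists A2, B2; split=> //; [exact: rt_trans AA1 A1A2 | exact: rt_trans BB1 B1B2].
Qed.

Lemma leM_in_Shc_bwd X Y A B : packed k A -> packed k B ->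
  in_Shc Y A B -> leM X Y -> exists A' B', [/\ leM A' A, leM B' B & in_Shc X A' B'].
Proof.
move=> pA pB YAB XY.
elim: (clos_rt_rtn1 _ _ _ _ XY) A B pA pB YAB => [| Y0 Z0 YZ0 _ IH] A B pA pB ZAB.
  by exists A, B; split=> //; exact: rt_refl.
have [A1 [B1 [A1A B1B YAB1]]] := mstep_in_Shc_bwd pA pB ZAB YZ0.
have [A2 [B2 [A2A1 B2B1 XAB2]]] :=
  IH A1 B1 ((packed_leM k A1A).2 pA) ((packed_leM k B1B).2 pB) YAB1.
by exists A2, B2; split=> //; [exact: rt_trans A2A1 A1A | exact: rt_trans B2B1 B1B].
Qed.

End Simulation.

Theorem lemma2p1 (k n1 n2 : nat) (M : 'M[nat]_(n1 + n2))
    (A : 'M[nat]_n1) (B : 'M[nat]_n2) :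
  packed k M -> packed k A -> packed k B ->
  (leM (ov A B) M <->
     exists (A' : 'M[nat]_n1) (B' : 'M[nat]_n2),
       [/\ packed k A', packed k B', leM A A', leM B B' & in_Shc M A' B'])
  /\
  (leM M (un A B) <->
     exists (A' : 'M[nat]_n1) (B' : 'M[nat]_n2),
       [/\ packed k A', packed k B', leM A' A, leM B' B & in_Shc M A' B']).
Proof.
move=> _ pA pB; split; split.
- move=> /(leM_in_Shc_fwd pA pB (in_Shc_ov A B)) [A' [B' [AA' BB' MAB']]].
  by exists A', B'; split=> //; [exact: (packed_leM k AA').1 | exact: (packed_leM k BB').1].
- case=> A' [B' [_ _ AA' BB' /in_ShcP [s [sh ->]]]].
  exact: rt_trans (leM_ov AA' BB') (leM_ov_shuffle A' B' sh).
- move=> /(leM_in_Shc_bwd pA pB (in_Shc_un A B)) [A' [B' [A'A B'B MAB']]].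
  by exists A', B'; split=> //; [exact: (packed_leM k A'A).2 | exact: (packed_leM k B'B).2].
- case=> A' [B' [_ _ A'A B'B /in_ShcP [s [sh ->]]]].
  exact: rt_trans (leM_shuffle_un A' B' sh) (leM_un A'A B'B).
Qed.
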